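(* Let $n\ge2$, $\beta\in\partial\mathbb{D}$, $\{\alpha_j\}_{j=0}^{n-2}\in\mathbb{D}^{n-1}$, and $\rho_0=(1-|\alpha_0|^2)^{1/2}$. Let $C_n,S_n$ be built from $(\{\alpha_j\}_{j=0}^{n-2},\beta)$ and $C_{n-1},S_{n-1}$ from $(\{\alpha_{j+1}\}_{j=0}^{n-3},\beta)$, and define for $m\in\{n-1,n\}$ \[ G_m(z,w)=-i\,\frac{C_m(z)\,wS_m(w)-C_m(w)\,zS_m(z)}{z-w}. \] Then \[ G_n(z,w)=z\rho_0^2G_{n-1}(z,w)-i\rho_0^2\,zS_{n-1}(z)C_{n-1}(w). \]
   Context: For Verblunsky coefficients in $\mathbb{D}$, $\Phi_0=1$, $\Phi_{k+1}(z)=z\Phi_k(z)-\bar\alpha_k\Phi_k^*(z)$ with $\Phi_k^*(z)=z^k\overline{\Phi_k(1/\bar z)}$; $\Psi_k$ satisfies the same recursion with $\alpha_j$ replaced by $-\alpha_j$. For $m\ge1$, $P_m(z;\{\alpha_j\}_{j=0}^{m-2},\beta)=z\Phi_{m-1}(z)-\bar\beta\Phi_{m-1}^*(z)$, $Q_m(z;\{\alpha_j\}_{j=0}^{m-2},\beta)=z\Psi_{m-1}(z)+\bar\beta\Psi_{m-1}^*(z)$, $C_m=\tfrac12(P_m+Q_m)$, $S_m=\tfrac12(P_m-Q_m)$. The identity is an identity of polynomials in $z,w$. *)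

From mathcomp Require Import all_boot all_order all_algebra.
Set Implicit Arguments. Unset Strict Implicit. Unset Printing Implicit Defensive.
Import Order.TTheory GRing.Theory Num.Theory.
Local Open Scope ring_scope.

Section OPUC.
Variable R : numClosedFieldType.

(* reversed polynomial of formal degree k: p^*(z) = z^k conj(p(1/conj z)) *)
Definition revc (k : nat) (p : {poly R}) : {poly R} :=
  \poly_(i < k.+1) (p`_(k - i))^*.

Fixpoint Phi (a : nat -> R) (k : nat) : {poly R} :=
  match k with
  | 0 => 1
  | k.+1 => 'X * Phi a k - ((a k)^*)%:P * revc k (Phi a k)
  end.

Definition Psi (a : nat -> R) (k : nat) : {poly R} := Phi (fun j => - a j) k.

(* paraorthogonal polynomials, built from ({a_j}_{j=0}^{m-2}, b), m >= 1 *)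
Definition Ppoly (m : nat) (a : nat -> R) (b : R) : {poly R} :=
  'X * Phi a m.-1 - (b^*)%:P * revc m.-1 (Phi a m.-1).
Definition Qpoly (m : nat) (a : nat -> R) (b : R) : {poly R} :=
  'X * Psi a m.-1 + (b^*)%:P * revc m.-1 (Psi a m.-1).

Definition Cpoly (m : nat) (a : nat -> R) (b : R) : {poly R} :=
  2%:R^-1 *: (Ppoly m a b + Qpoly m a b).
Definition Spoly (m : nat) (a : nat -> R) (b : R) : {poly R} :=
  2%:R^-1 *: (Ppoly m a b - Qpoly m a b).

Definition Gfun (m : nat) (a : nat -> R) (b : R) (z w : R) : R :=
  - 'i * ((Cpoly m a b).[z] * (w * (Spoly m a b).[w])
          - (Cpoly m a b).[w] * (z * (Spoly m a b).[z])) / (z - w).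

Definition shift (a : nat -> R) : nat -> R := fun j => a j.+1.
End OPUC.

(* The pair (Phi_k, Phi_k^* ) evolves under the Szego transfer matrix
   [[z, -conj a_k], [-a_k z, 1]], and by linearity C_{m+1} and S_{m+1} are
   z (first entry) - conj b (second entry) of the products of these matrices
   applied to (1, 0) and (0, 1) respectively.  Splitting off the factor for
   a_0 gives C_n = z (C_{n-1} - a_0 S_{n-1}) and
   S_n = S_{n-1} - conj a_0 C_{n-1}; the numerator of G_n then picks up the
   determinant 1 - |a_0|^2 = rho_0^2, and what remains is a rational identity. *)
From mathcomp Require Import all_boot all_order all_algebra.
From mathcomp Require Import ring.
Import Order.TTheory GRing.Theory Num.Theory.
Local Open Scope ring_scope.
Set Implicit Arguments.

Section Szego.
Variable R : numClosedFieldType.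
Implicit Types (a : nat -> R) (c : R) (p x y : {poly R}) (uv : {poly R} * {poly R}).

Lemma size_Phi a k : (size (Phi a k) <= k.+1)%N.
Proof.
elim: k => [|k IH] /=; first by rewrite size_poly1.
rewrite (leq_trans (size_polyD _ _)) // size_polyN geq_max mul_polyC.
rewrite (leq_trans (size_scale_leq _ _)) ?andbT; last exact: leqW (size_poly _ _).
by rewrite (leq_trans (size_polyMleq _ _)) // size_polyX add2n.
Qed.

Definition szego_step c uv : {poly R} * {poly R} :=
  ('X * uv.1 - (c^*)%:P * uv.2, uv.2 - c%:P * ('X * uv.1)).

Fixpoint szego a k uv : {poly R} * {poly R} :=
  if k is k.+1 then szego_step (a k) (szego a k uv) else uv.

Lemma revc_szego_step k c p : (size p <= k.+1)%N ->
  revc k.+1 (szego_step c (p, revc k p)).1 = (szego_step c (p, revc k p)).2.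
Proof.
move=> size_p; apply/polyP => i.
rewrite /szego_step /revc /= coefB coefCM coefXM !coef_poly.
case: (ltnP i k.+2) => [le_i_k1 | lt_k1_i]; last first.
  rewrite ltnNge ltnW //= (leq_sizeP _ _ size_p) 1?ltnNge //; last first.
    by rewrite -ltnNge ltn_predRL.
  by rewrite if_same mulr0 subr0.
rewrite coefB coefCM coefXM coef_poly rmorphB rmorphM /= conjCK.
case: i le_i_k1 => [|i] le_i_k1 /=.
  by rewrite !subn0 ltnn conjC0 !mulr0.
move: le_i_k1; rewrite !ltnS subSS leq_eqVlt => /predU1P[-> | lt_i_k].
  by rewrite subnn /= subn0 ltnn conjC0 conjCK.
rewrite leq_subr (subKn (ltnW lt_i_k)) conjCK lt_i_k subn_eq0 leqNgt lt_i_k.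
by rewrite /= subnS.
Qed.

Lemma Phi_szego a k : (Phi a k, revc k (Phi a k)) = szego a k (1, 1).
Proof.
elim: k => [|k IH] /=.
  congr pair; apply/polyP => i; rewrite /revc coef_poly !coef1.
  by case: i => [|i] /=; rewrite ?conjC1.
by rewrite -IH revc_szego_step ?size_Phi.
Qed.

Lemma szego_opp a k x y :
  szego (fun j => - a j) k (x, y) =
  ((szego a k (x, - y)).1, - (szego a k (x, - y)).2).
Proof.
elim: k => [|k IH] /=; first by rewrite opprK.
by rewrite IH /szego_step /= rmorphN polyCN; congr pair; ring.
Qed.

Lemma szego_decomp a k x y :
  let E := szego a k (1, 0) in let F := szego a k (0, 1) in
  szego a k (x, y) = (x * E.1 + y * F.1, x * E.2 + y * F.2).
Proof.
elim: k => [|k IH] /=; first by congr pair; ring.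
by rewrite IH /szego_step /=; congr pair; ring.
Qed.

Lemma szegoSl a k uv :
  szego a k.+1 uv = szego (shift a) k (szego_step (a 0%N) uv).
Proof. by elim: k => [|k IH] //=; rewrite -IH. Qed.

Lemma half_double p : 2%:R^-1 *: (p *+ 2) = p.
Proof.
by rewrite -scalerMnr scalerMnl -mulr_natr mulVf ?scale1r ?pnatr_eq0.
Qed.

Lemma Cpoly_Spoly_szego m a b :
  let E := szego a m (1, 0) in let F := szego a m (0, 1) in
  Cpoly m.+1 a b = 'X * E.1 - (b^*)%:P * E.2 /\
  Spoly m.+1 a b = 'X * F.1 - (b^*)%:P * F.2.
Proof.
move=> E F.
have := Phi_szego a m; rewrite szego_decomp -/E -/F => -[Phi_m revc_Phi_m].
have := Phi_szego (fun j => - a j) m.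
rewrite szego_opp szego_decomp -/E -/F => -[Psi_m revc_Psi_m].
rewrite /Cpoly /Spoly /Ppoly /Qpoly /Psi /= revc_Phi_m Phi_m revc_Psi_m Psi_m.
by split; rewrite -[RHS]half_double; congr (_ *: _); ring.
Qed.

Lemma Cpoly_shift m a b :
  Cpoly m.+2 a b =
  'X * (Cpoly m.+1 (shift a) b - (a 0%N)%:P * Spoly m.+1 (shift a) b).
Proof.
have [-> _] := Cpoly_Spoly_szego m.+1 a b.
have [-> ->] := Cpoly_Spoly_szego m (shift a) b.
by rewrite szegoSl szego_decomp /szego_step /=; ring.
Qed.

Lemma Spoly_shift m a b :
  Spoly m.+2 a b =
  Spoly m.+1 (shift a) b - ((a 0%N)^*)%:P * Cpoly m.+1 (shift a) b.
Proof.
have [_ ->] := Cpoly_Spoly_szego m.+1 a b.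
have [-> ->] := Cpoly_Spoly_szego m (shift a) b.
by rewrite szegoSl szego_decomp /szego_step /=; ring.
Qed.

End Szego.

Theorem lemma5p3 (R : numClosedFieldType) (n : nat) (a : nat -> R) (b : R) :
  (2 <= n)%N -> `|b| = 1 ->
  (forall j : nat, (j <= n - 2)%N -> `|a j| < 1) ->
  forall z w : R, z != w ->
  let rho0 := sqrtC (1 - `|a 0%N| ^+ 2) in
  Gfun n a b z w =
    z * rho0 ^+ 2 * Gfun n.-1 (shift a) b z w
    - 'i * rho0 ^+ 2 * (z * (Spoly n.-1 (shift a) b).[z])
        * (Cpoly n.-1 (shift a) b).[w].
Proof.
move=> n_ge2 _ _ z w z_neq_w rho0.
have -> : rho0 ^+ 2 = 1 - a 0%N * (a 0%N)^* by rewrite sqrtCK normCK.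
case: n n_ge2 => [|[|m]] // _.
rewrite /Gfun -[m.+2.-1]/m.+1 Cpoly_shift Spoly_shift.
rewrite !(hornerM, hornerX, hornerD, hornerN, hornerC).
by field; rewrite subr_eq0.
Qed.
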